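(* $\liminf_{n\to\infty}D(n)=\frac12$. Consequently, for every real $u$ with $0\le u<\frac12$, the set $\mathcal{N}(u)=\{n\ge1: D(n)>u\}$ contains all but finitely many positive integers; in particular it has natural density and logarithmic density both equal to $1$.
   Context: A subset $S\subseteq \mathbb{Z}/n\mathbb{Z}$ is called product-free if there are no $a,b,c\in S$ (not necessarily distinct) with $ab\equiv c\pmod n$. For a positive integer $n$, $D(n)$ denotes the maximum of $|S|/n$ over all product-free subsets $S$ of $\mathbb{Z}/n\mathbb{Z}$. *)

From mathcomp Require Import all_boot.

Module PF.
Definition product_free (n : nat) (S : {set 'I_n}) : bool :=
  [forall a in S, forall b in S, forall c in S, (a * b) %% n != c %[mod n]].

Definition Dnum (n : nat) : nat :=
  \max_(S : {set 'I_n} | @product_free n S) #|S|.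
End PF.

From Stdlib Require Import Reals ClassicalEpsilon.
Open Scope R_scope.

(* D(n) = max |S|/n over product-free S ⊆ Z/nZ (meaningful for n >= 1). *)
Definition D (n : nat) : R := INR (PF.Dnum n) / INR n.

Definition ind (A : nat -> Prop) (n : nat) : R :=
  if excluded_middle_informative (A n) then 1 else 0.

Definition count_upto (A : nat -> Prop) (N : nat) : R :=
  sum_f_R0 (fun n => if Nat.eqb n 0 then 0 else ind A n) N.
Definition logsum_upto (A : nat -> Prop) (N : nat) : R :=
  sum_f_R0 (fun n => if Nat.eqb n 0 then 0 else ind A n / INR n) N.

Definition has_natural_density (A : nat -> Prop) (d : R) : Prop :=
  Un_cv (fun N => count_upto A N / INR N) d.

Definition has_log_density (A : nat -> Prop) (d : R) : Prop :=
  Un_cv (fun N => logsum_upto A N / ln (INR N)) d.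

Definition liminf_eq (a : nat -> R) (l : R) : Prop :=
  (forall eps, eps > 0 -> exists N, forall n, (N <= n)%nat -> l - eps < a n) /\
  (forall eps, eps > 0 -> forall N, exists n, (N <= n)%nat /\ a n < l + eps).

Definition Nset (u : R) (n : nat) : Prop := (1 <= n)%nat /\ D n > u.

(* Upper bound (Dnum_prime_upper): for a prime p, a product-free S containing
   a is disjoint from its image a S under the bijection x |-> a x, so
   D(p) <= 1/2 for the infinitely many primes p.

   Lower bound (Dnum_lower): each large n has a prime-power part p^k > 2Q + 1,
   since otherwise n <= (2Q+1)^(2Q+1).  Given a quadratic character chi of
   conductor p^c on p-adic units (u = 1 mod 4 for p = 2, Euler's criterion for
   odd p), the residues mod p^k of valuation v <= k - c whose unit part has
   chi equal to the parity of v form a product-free set W mod p^k.  For a unit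
   g mod n with chi g = -1 (a non-residue lifted by the Chinese remainder
   theorem), W and g^-1 W cover every residue mod n outside the multiples of
   d = p^(k-c+1), so n <= 2 D_num(n) + n/d + 1 and D(n) >= 1/2 - O(1/Q). *)

From mathcomp Require Import all_boot all_algebra finfield.
From mathcomp Require Import zify.
From Pilot Require Import Defs.

Set Implicit Arguments. Unset Strict Implicit. Unset Printing Implicit Defensive.
Import GRing.Theory.

Lemma product_freeP n (S : {set 'I_n}) :
  reflect (forall a b c, a \in S -> b \in S -> c \in S -> (a * b) %% n != c)
          (PF.product_free n S).
Proof.
rewrite /PF.product_free; apply: (iffP forall_inP) => [PFS a b c aS bS cS | PFS a aS].
  move/forall_inP: (PFS a aS) => /(_ b bS) /forall_inP /(_ c cS).
  by rewrite modn_mod (modn_small (ltn_ord c)).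
apply/forall_inP => b bS; apply/forall_inP => c cS.
by rewrite modn_mod (modn_small (ltn_ord c)); apply: PFS.
Qed.

Lemma dvdn_modm d m x : d %| m -> (d %| x %% m) = (d %| x).
Proof. by move=> dvd_dm; rewrite /dvdn modn_dvdm. Qed.

Lemma Dnum_ge n (S : {set 'I_n}) : PF.product_free n S -> #|S| <= PF.Dnum n.
Proof. by move=> PFS; apply: leq_bigmax_cond. Qed.

Lemma eqn_mod_coprime_mull g n x y :
  coprime g n -> g * x = g * y %[mod n] -> x = y %[mod n].
Proof.
move=> co.
wlog le_xy : x y / x <= y.
  by move=> H; case: (leqP x y) => [/H//|/ltnW lt_yx /esym/H/esym]; apply.
move/eqP; rewrite eq_sym eqn_mod_dvd ?leq_mul2l ?le_xy ?orbT // -mulnBr.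
by rewrite Gauss_dvdr ?(coprime_sym n) // -eqn_mod_dvd // eq_sym => /eqP.
Qed.

Definition mulmod n (n_gt0 : 0 < n) (g : nat) (x : 'I_n) : 'I_n :=
  Ordinal (ltn_pmod (g * x) n_gt0).

Lemma mulmod_inj n (n_gt0 : 0 < n) g : coprime g n -> injective (mulmod n_gt0 g).
Proof.
move=> co x y /(congr1 val) /= /eqP e; apply: val_inj => /=.
rewrite -(modn_small (ltn_ord x)) -(modn_small (ltn_ord y)).
by apply: (eqn_mod_coprime_mull co); apply/eqP.
Qed.

Lemma card_multiples n d : #|[set x : 'I_n | d %| x]| <= (n %/ d).+1.
Proof.
pose h (x : 'I_n) : 'I_(n %/ d).+1 := inord (x %/ d).
have h_inj : {in [set x : 'I_n | d %| x] &, injective h}.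
  move=> x y; rewrite !inE => dx dy /(congr1 (@nat_of_ord _)).
  have bnd (z : 'I_n) : z %/ d < (n %/ d).+1 by rewrite ltnS leq_div2r // ltnW.
  rewrite /h !inordK ?bnd // => e.
  by apply: val_inj; rewrite /= -(divnK dx) -(divnK dy) e.
by rewrite -(card_in_imset h_inj) -[X in _ <= X]card_ord max_card.
Qed.

Section ProductFreeClass.
(* A quadratic character chi of conductor p^c on the p-adic units: chi u only
   depends on u mod p^c, and chi (u * w) is true iff chi u and chi w agree. *)
Variables (p c k : nat) (chi : nat -> bool).
Hypothesis p_prime : prime p.
Hypothesis c_gt0 : 0 < c.
Hypothesis chi_mod : forall u, chi u = chi (u %% p ^ c).
Hypothesis chi_mul :
  forall u w, coprime p u -> coprime p w -> chi (u * w) = (chi u == chi w).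

Definition unit_part (y : nat) : nat := y %/ p ^ logn p y.

Lemma unit_partE y : y != 0 -> coprime p (unit_part y) /\ y = p ^ logn p y * unit_part y.
Proof.
rewrite -lt0n => y_gt0; have [u co_u def_y] := pfactor_coprime p_prime y_gt0.
have -> : unit_part y = u by rewrite /unit_part {1}def_y mulnK ?expn_gt0 ?prime_gt0.
by rewrite mulnC -def_y.
Qed.

Lemma scaled_residue a w : coprime p w -> a + c <= k ->
  let y := (p ^ a * w) %% p ^ k in
  [/\ y != 0, logn p y = a & chi (unit_part y) = chi w].
Proof.
move=> co_w le_ack y.
have def_pk : p ^ k = p ^ a * p ^ (k - a) by rewrite -expnD subnKC //; lia.
have def_y : y = p ^ a * (w %% p ^ (k - a)) by rewrite /y def_pk muln_modr.
have p_dvd : p %| p ^ (k - a) by rewrite -{1}(expn1 p) dvdn_exp2l //; lia.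
have co_w' : coprime p (w %% p ^ (k - a)).
  by rewrite -coprime_modr (modn_dvdm _ p_dvd) coprime_modr.
have pa_gt0 : 0 < p ^ a by rewrite expn_gt0 prime_gt0.
have logn_y : logn p y = a by rewrite def_y mulnC logn_Gauss // pfactorK.
split => //.
- rewrite def_y muln_eq0 negb_or -lt0n pa_gt0; apply: contraTN co_w' => /eqP->.
  by rewrite /coprime gcdn0 neq_ltn prime_gt1 ?orbT.
- rewrite /unit_part logn_y def_y mulKn // chi_mod modn_dvdm ?dvdn_exp2l -?chi_mod //.
  lia.
Qed.

Definition in_class (y : nat) : bool :=
  [&& y != 0, logn p y + c <= k & chi (unit_part y) == odd (logn p y)].

(* W is product-free mod p^k: valuations add and character values multiply,
   so the parity condition fails for a product; if the valuation overflows,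
   the product has valuation > k - c. *)
Lemma in_class_mul y1 y2 :
  in_class y1 -> in_class y2 -> ~~ in_class ((y1 * y2) %% p ^ k).
Proof.
case/and3P=> y1_nz le1 ch1; case/and3P=> y2_nz le2 ch2.
have [co1 def_y1] := unit_partE y1_nz.
have [co2 def_y2] := unit_partE y2_nz.
set v1 := logn p y1 in le1 ch1 def_y1; set v2 := logn p y2 in le2 ch2 def_y2.
have def_y12 : y1 * y2 = p ^ (v1 + v2) * (unit_part y1 * unit_part y2).
  by rewrite {1}def_y1 {1}def_y2 expnD mulnACA.
have [le12|gt12] := leqP (v1 + v2 + c) k.
  have co12 : coprime p (unit_part y1 * unit_part y2) by rewrite coprimeMr co1.
  have [_ lg ch] := scaled_residue co12 le12.
  rewrite def_y12 /in_class lg ch chi_mul // (eqP ch1) (eqP ch2) oddD.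
  by case: (odd v1); case: (odd v2); rewrite /= ?andbF.
apply/negP=> /and3P[y_nz le3 _].
have : p ^ (minn (v1 + v2) k) %| (y1 * y2) %% p ^ k.
  rewrite dvdn_modm ?dvdn_exp2l ?geq_minr //.
  by rewrite def_y12 dvdn_mulr // dvdn_exp2l // geq_minl.
rewrite pfactor_dvdn // ?lt0n //; move: (logn _ _) le3 => L le3 hL.
lia.
Qed.

Lemma in_class_flip g y : coprime p g -> chi g = false -> y != 0 ->
  logn p y + c <= k -> ~~ in_class y -> in_class ((g * y) %% p ^ k).
Proof.
move=> co_g chi_g y_nz le_y y_notin.
have [co_u def_y] := unit_partE y_nz.
have co_gu : coprime p (g * unit_part y) by rewrite coprimeMr co_g.
have [gy_nz lg ch] := scaled_residue co_gu le_y.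
have -> : (g * y) %% p ^ k = (p ^ logn p y * (g * unit_part y)) %% p ^ k.
  by rewrite {1}def_y mulnCA.
rewrite /in_class gy_nz lg ch chi_mul // chi_g.
move: y_notin; rewrite /in_class y_nz le_y /=.
by case: (chi _); case: (odd _).
Qed.

Definition class_set n : {set 'I_n} := [set x : 'I_n | in_class (x %% p ^ k)].

Lemma class_set_product_free n : p ^ k %| n -> PF.product_free n (class_set n).
Proof.
move=> dvd_pk; apply/product_freeP => a b z; rewrite !inE => aW bW zW.
apply: contraTneq zW => <-.
by rewrite modn_dvdm // -modnMm; apply: in_class_mul.
Qed.

Lemma class_set_cover n (n_gt0 : 0 < n) g (x : 'I_n) :
  c <= k -> p ^ k %| n -> coprime p g -> chi g = false ->
  ~~ (p ^ (k - c + 1) %| x) -> (x \in class_set n) || (mulmod n_gt0 g x \in class_set n).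
Proof.
move=> le_ck dvd_pk co_pg chi_g x_ndvd.
have dvd_d : p ^ (k - c + 1) %| p ^ k by rewrite dvdn_exp2l //; lia.
have y_nz : x %% p ^ k != 0.
  by apply: contra x_ndvd => /eqP x0; apply: dvdn_trans dvd_d _; rewrite /dvdn x0.
have y_le : logn p (x %% p ^ k) + c <= k.
  rewrite leqNgt; apply: contra x_ndvd => lt_k.
  rewrite -(dvdn_modm _ dvd_d) pfactor_dvdn ?lt0n //; lia.
rewrite !inE /=; case xW : (in_class _) => //=.
by rewrite modn_dvdm // -modnMmr; apply: in_class_flip; rewrite ?xW.
Qed.

(* Counting: the residues not divisible by d = p^(k-c+1) are covered by W and
   its preimage under the bijection x |-> g x, while at most n/d + 1 residues
   are multiples of d; hence n <= 2 D_num(n) + n/d + 1. *)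
Lemma Dnum_lower_character n g : c <= k -> p ^ k %| n -> 0 < n ->
  coprime g n -> coprime p g -> chi g = false ->
  n <= 2 * PF.Dnum n + (n %/ p ^ (k - c + 1)).+1.
Proof.
move=> le_ck dvd_pk n_gt0 co_gn co_pg chi_g.
set d := p ^ (k - c + 1); set W := class_set n.
pose T := [set x : 'I_n | ~~ (d %| x)].
have T_sub : T \subset W :|: mulmod n_gt0 g @^-1: W.
  apply/subsetP => x; rewrite inE => x_nd.
  by have := class_set_cover n_gt0 le_ck dvd_pk co_pg chi_g x_nd; rewrite !inE.
have card_T : #|T| <= 2 * PF.Dnum n.
  apply: leq_trans (subset_leq_card T_sub) _.
  rewrite (leq_trans (leq_card_setU _ _)) // card_preimset; last exact: mulmod_inj.
  by rewrite addnn -mul2n leq_mul2l Dnum_ge ?class_set_product_free ?orbT.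
have card_notT : #|~: T| <= (n %/ d).+1.
  apply: leq_trans (card_multiples n d); apply: subset_leq_card.
  by apply/subsetP => x; rewrite !inE negbK.
by have := leq_add card_T card_notT; rewrite cardsC card_ord.
Qed.

End ProductFreeClass.

Definition chi4 (u : nat) : bool := u %% 4 == 1.

Lemma chi4_mod u : chi4 u = chi4 (u %% 2 ^ 2).
Proof. by rewrite /chi4 modn_mod. Qed.

Lemma chi4_mul u w : coprime 2 u -> coprime 2 w -> chi4 (u * w) = (chi4 u == chi4 w).
Proof.
have odd_mod4 v : coprime 2 v -> v %% 4 = 1 \/ v %% 4 = 3.
  rewrite coprime2n => v_odd; have : v %% 2 = 1 by rewrite modn2 v_odd.
  lia.
move=> /odd_mod4 u4 /odd_mod4 w4; rewrite /chi4 -modnMm.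
by case: u4 => ->; case: w4 => ->.
Qed.

Section EulerCharacter.
Local Open Scope ring_scope.
Variable p : nat.
Hypothesis p_prime : prime p.
Hypothesis p_odd : odd p.

Definition euler_char (u : nat) : bool := (u%:R : 'F_p) ^+ p./2 == 1.

Lemma euler_char_mod u : euler_char u = euler_char (u %% p ^ 1).
Proof. by rewrite /euler_char expn1 Fp_nat_mod. Qed.

(* Fermat: x^((p-1)/2) squares to x^(p-1) = 1, so it is 1 or -1. *)
Lemma Fp_half_power_sign (x : 'F_p) : x != 0 -> (x ^+ p./2 == 1) || (x ^+ p./2 == -1).
Proof.
move=> x_nz; rewrite -sqrf_eq1 -exprM muln2 odd_halfK //.
apply/eqP; apply: (mulIf x_nz); rewrite mul1r -exprSr prednK ?prime_gt0 //.
by have := expf_card x; rewrite card_Fp.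
Qed.

Lemma Fp_opp1_neq1 : (-1 : 'F_p) != 1.
Proof.
apply/eqP => opp1; have : (2%:R : 'F_p) = 0 by rewrite mulr2n -{2}opp1 subrr.
move/(congr1 (@nat_of_ord _)); rewrite val_Fp_nat // modn_small //.
exact: odd_prime_gt2.
Qed.

(* Multiplicativity: the signs +-1 multiply. *)
Lemma euler_char_mul u w :
  coprime p u -> coprime p w -> euler_char (u * w) = (euler_char u == euler_char w).
Proof.
have nz v : coprime p v -> (v%:R : 'F_p) != 0 by rewrite -unitfE unitFpE.
move=> /nz/Fp_half_power_sign u_sign /nz/Fp_half_power_sign w_sign.
rewrite /euler_char natrM exprMn.
case/orP: u_sign => /eqP->; case/orP: w_sign => /eqP->;
  by rewrite ?mulr1 ?mul1r ?mulrNN ?mulr1 ?eqxx ?(negbTE Fp_opp1_neq1).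
Qed.

(* A quadratic non-residue exists: otherwise all p - 1 nonzero elements of F_p
   would be roots of X^((p-1)/2) - 1. *)
Lemma exists_non_residue : exists2 g, coprime p g & euler_char g = false.
Proof.
have p_gt2 := odd_prime_gt2 p_odd p_prime.
have [/existsP[x /andP[x_nz x_nonres]] | all_res] :=
  boolP [exists x : 'F_p, (x != 0) && (x ^+ p./2 != 1)].
  exists (val x); first by rewrite -unitFpE // natr_Zp unitfE.
  by rewrite /euler_char natr_Zp; apply/negbTE.
have h_gt0 : (0 < p./2)%N by rewrite half_gt0 ltnW.
have too_many : (p./2 < p.-1)%N.
  by rewrite -(odd_halfK p_odd) -addnn -addn1 leq_add2l.
suff : all p./2.-unity_root (enum [pred x : 'F_p | x != 0]).
  move/(max_unity_roots h_gt0)/(_ (enum_uniq _)).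
  by rewrite -cardE cardC1 card_Fp // leqNgt too_many.
apply/allP => x; rewrite mem_enum inE unity_rootE => x_nz.
by move/existsPn: all_res => /(_ x); rewrite x_nz negbK.
Qed.

End EulerCharacter.

(* Chinese remainders: a unit g0 mod p^c with chi g0 = false lifts to a unit g
   mod n with the same residue mod p^c, when p^c divides n. *)
Lemma lift_non_residue n p c (chi : nat -> bool) g0 :
  prime p -> 0 < n -> 0 < c -> p ^ c %| n ->
  (forall u, chi u = chi (u %% p ^ c)) -> coprime p g0 -> chi g0 = false ->
  exists g, [/\ coprime g n, coprime p g & chi g = false].
Proof.
move=> p_prime n_gt0 c_gt0 dvd_pc chi_mod co_pg0 chi_g0.
have co12 := coprime_partC p n n.
set m1 := n`_p in co12 *; set m2 := n`_p^' in co12 *.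
set g := chinese m1 m2 g0 1.
have dvd_m1 : p ^ c %| m1.
  by rewrite /m1 p_part dvdn_exp2l // -pfactor_dvdn.
have g_mod d : d %| m1 -> g = g0 %[mod d].
  by move=> dvd_d; rewrite -(modn_dvdm g dvd_d) chinese_modl // modn_dvdm.
have dvd_p : p %| m1 by apply: dvdn_trans dvd_m1; rewrite -{1}(expn1 p) dvdn_exp2l.
have co_pg : coprime p g by rewrite -coprime_modr g_mod // coprime_modr.
exists g; split => //; last by rewrite chi_mod g_mod // -chi_mod.
rewrite -(partnC p n_gt0) coprimeMr; apply/andP; split.
  by rewrite /m1 p_part coprimeXr // coprime_sym.
have co_1mod m : coprime (1 %% m) m by case: m => [|[|m]] //; rewrite modn_small ?coprime1n.
by rewrite -coprime_modl /g chinese_modr.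
Qed.

(* If every prime-power part of n is at most Q, then n <= Q^Q: n is a product
   of at most Q such parts, one for each prime p <= Q. *)
Lemma small_prime_parts Q n : 0 < Q -> 0 < n ->
  {in primes n, forall p, p ^ logn p n <= Q} -> n <= Q ^ Q.
Proof.
move=> Q_gt0 n_gt0 small.
rewrite {1}(prod_prime_decomp n_gt0) prime_decompE big_map /=.
apply: leq_trans (_ : \prod_(p <- primes n) Q <= _).
  by rewrite big_seq [leqRHS]big_seq; apply: leq_prod.
rewrite big_const_seq count_predT iter_muln_1; apply: leq_pexp2l => //.
rewrite -[Q in _ <= Q](size_iota 1 Q); apply: uniq_leq_size (primes_uniq n) _.
move=> p p_in; rewrite mem_iota add1n ltnS.
have p_prime : prime p by move: p_in; rewrite mem_primes => /andP[].
rewrite prime_gt0 //=; apply: leq_trans (small p p_in).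
by rewrite -{1}(expn1 p); apply: leq_pexp2l; [exact: prime_gt0 | rewrite logn_gt0].
Qed.

(* Every prime-power part p^k of n yields n <= 2 D_num(n) + n/d + 1 for some
   d >= p^k / 2, via the character chi4 (p = 2, k >= 2) or Euler's character
   (p odd); the case p^k = 2 is trivial with d = 1. *)
Lemma Dnum_lower_prime_part n p : 0 < n -> p \in primes n ->
  exists2 d, p ^ logn p n <= 2 * d & n <= 2 * PF.Dnum n + (n %/ d).+1.
Proof.
move=> n_gt0 p_in.
have p_prime : prime p by move: p_in; rewrite mem_primes => /andP[].
have k_gt0 : 0 < logn p n by rewrite logn_gt0.
have dvd_pk : p ^ logn p n %| n := pfactor_dvdnn p n.
have [p2 | p_odd] := even_prime p_prime.
  subst p; set k := logn 2 n in k_gt0 dvd_pk *.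
  have [le_k1 | le_2k] := leqP k 1.
    exists 1; last by rewrite divn1; lia.
    by apply: leq_trans (leq_pexp2l _ le_k1) _.
  have dvd_4 : 2 ^ 2 %| n by apply: dvdn_trans dvd_pk; rewrite dvdn_exp2l.
  have [g [co_gn co_2g chi_g]] := lift_non_residue p_prime n_gt0 (isT : 0 < 2)
    dvd_4 chi4_mod (isT : coprime 2 3) erefl.
  have := Dnum_lower_character p_prime (isT : 0 < 2) chi4_mod chi4_mul le_2k dvd_pk
    n_gt0 co_gn co_2g chi_g.
  by exists (2 ^ (k - 2 + 1)) => //; rewrite -expnS; apply: leq_pexp2l => //; lia.
have [g0 co_pg0 chi_g0] := exists_non_residue p_prime p_odd.
have dvd_p : p ^ 1 %| n by apply: dvdn_trans dvd_pk; rewrite dvdn_exp2l.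
have [g [co_gn co_pg chi_g]] := lift_non_residue p_prime n_gt0 (isT : 0 < 1)
  dvd_p (euler_char_mod p_prime) co_pg0 chi_g0.
have := Dnum_lower_character p_prime (isT : 0 < 1) (euler_char_mod p_prime)
  (euler_char_mul p_prime p_odd) k_gt0 dvd_pk n_gt0 co_gn co_pg chi_g.
by rewrite subnK // => bound; exists (p ^ logn p n); rewrite ?leq_pmull.
Qed.

(* The main lower bound: for every Q, each large n has a prime-power part
   p^k > 2Q + 1, hence n <= 2 D_num(n) + n/d + 1 with d > Q. *)
Lemma Dnum_lower Q : exists N, forall n, N <= n ->
  exists2 d, Q <= d & n <= 2 * PF.Dnum n + (n %/ d).+1.
Proof.
pose Q' := (2 * Q).+1; exists (Q' ^ Q').+1 => n lt_n.
have n_gt0 : 0 < n by apply: leq_trans lt_n.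
have [p p_in big_part] : exists2 p, p \in primes n & Q' < p ^ logn p n.
  apply/hasP; apply: contraLR lt_n; rewrite -all_predC -leqNgt => /allP small.
  by apply: small_prime_parts => // p /small; rewrite /= -leqNgt.
have [d le_pk_d bound] := Dnum_lower_prime_part n_gt0 p_in.
by exists d => //; rewrite /Q' in big_part; lia.
Qed.

Lemma Dnum_lower_linear Q : 0 < Q ->
  exists N, forall n, N <= n -> Q * n <= 2 * Q * PF.Dnum n + n + Q.
Proof.
move=> Q_gt0; have [N lower] := Dnum_lower Q; exists N => n /lower[d le_Qd bound].
have le_div : n %/ d <= n %/ Q by apply: leq_div2l.
have := leq_divM n Q; move: bound le_div.
move: (n %/ d) (n %/ Q) (PF.Dnum n) => a b m; nia.
Qed.

(* For a prime p, a product-free S containing a (necessarily a != 0) is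
   disjoint from its bijective image a S, so 2 |S| <= p. *)
Lemma Dnum_prime_upper p : prime p -> 2 * PF.Dnum p <= p.
Proof.
move=> p_prime; have p_gt0 := prime_gt0 p_prime.
rewrite mulnC -leq_divRL //; apply/bigmax_leqP => S /product_freeP PFS.
rewrite leq_divRL // muln2 -addnn.
have [-> | [a aS]] := set_0Vmem S; first by rewrite cards0.
have a_gt0 : 0 < a.
  by rewrite lt0n; apply/negP => /eqP a0; move: (PFS a a a aS aS aS); rewrite a0 mod0n.
have co_ap : coprime a p by rewrite coprime_sym prime_coprime // gtnNdvd.
have disj : S :&: mulmod p_gt0 a @: S = set0.
  apply/setP => z; rewrite !inE; apply/negP => /andP[zS /imsetP[x xS def_z]].
  by move: (PFS a x z aS xS zS); rewrite def_z /= eqxx.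
rewrite -{2}(card_imset S (@mulmod_inj p p_gt0 a co_ap)) -cardsUI disj cards0 addn0.
by rewrite -[X in _ <= X](card_ord p) max_card.
Qed.

From Stdlib Require Import Reals Lra ClassicalEpsilon.
Open Scope R_scope.

Lemma INR_leq (a b : nat) : (a <= b)%nat -> INR a <= INR b.
Proof. by move/leP; apply: le_INR. Qed.

Lemma D_eventually_above eps : 0 < eps -> exists N, forall n, (N <= n)%nat -> 1/2 - eps < D n.
Proof.
move=> eps_gt0; have inv_gt0 := Rinv_0_lt_compat _ eps_gt0.
have [Q Q_big] := INR_unbounded (/ eps).
have Q_gt0 : (0 < Q)%nat by apply/ltP; apply: INR_lt; rewrite /=; lra.
have [N0 lower] := Dnum_lower_linear Q_gt0.
exists (maxn N0 Q) => n; rewrite geq_max => /andP[le_N0n le_Qn].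
have := INR_leq (lower n le_N0n); have := INR_leq le_Qn.
rewrite !plus_INR !mult_INR /D => le_Qm bound.
have Qeps : 1 < INR Q * eps.
  by have := Rmult_lt_compat_r eps _ _ eps_gt0 Q_big; rewrite Rinv_l; lra.
apply: (Rmult_lt_reg_r (INR n)); first lra.
rewrite /Rdiv Rmult_assoc Rinv_l ?Rmult_1_r; last lra.
apply: (Rmult_lt_reg_l (2 * INR Q)); first lra.
rewrite /= in bound; nra.
Qed.

(* D(p) <= 1/2 for every prime p, so D(n) < 1/2 + eps infinitely often. *)
Lemma D_frequently_below eps : 0 < eps -> forall N, exists n, (N <= n)%nat /\ D n < 1/2 + eps.
Proof.
move=> eps_gt0 N; have [p lt_Np p_prime] := prime_above N.
exists p; split; first exact: ltnW.
have := INR_leq (Dnum_prime_upper p_prime); rewrite mult_INR /= => bound.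
have p_gt0 : 0 < INR p by apply: lt_0_INR; apply/ltP; apply: prime_gt0.
suff : D p <= 1/2 by lra.
apply: (Rmult_le_reg_r (INR p)) => //.
rewrite /D /Rdiv Rmult_assoc Rinv_l; lra.
Qed.

(* Weighted counting function sum_{1 <= n <= N} [n in A] w(n); the natural
   and logarithmic counts are the cases w = 1 and w(n) = 1/n. *)
Definition weighted_count (A : nat -> Prop) (w : nat -> R) (N : nat) : R :=
  sum_f_R0 (fun n => if Nat.eqb n 0 then 0 else Defs.ind A n * w n) N.

Lemma count_upto_weighted A N : count_upto A N = weighted_count A (fun _ => 1) N.
Proof. by apply: sum_eq => n _; case: (Nat.eqb n 0); rewrite ?Rmult_1_r. Qed.

Lemma weighted_count_S A w N :
  weighted_count A w N.+1 = weighted_count A w N + Defs.ind A N.+1 * w N.+1.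
Proof. by []. Qed.

Lemma ind_bounds (A : nat -> Prop) n : 0 <= Defs.ind A n <= 1.
Proof. by rewrite /Defs.ind; case: (excluded_middle_informative (A n)) => h /=; lra. Qed.

Lemma ind_true (A : nat -> Prop) n : A n -> Defs.ind A n = 1.
Proof. by rewrite /Defs.ind; case: (excluded_middle_informative (A n)). Qed.

Lemma weighted_count_cofinite A w M :
  (forall n, (0 < n)%nat -> 0 <= w n <= 1) -> (forall n, (M <= n)%nat -> A n) -> forall N,
  let total := weighted_count (fun _ => True) w N in
  0 <= weighted_count A w N <= total /\ total <= INR N /\
  total - INR M <= weighted_count A w N.
Proof.
move=> w_bounds A_cofinite; elim=> [|N IH] total.
  by rewrite /total /weighted_count /=; have := pos_INR M; lra.
move: IH; rewrite /total !weighted_count_S (@ind_true (fun _ => True)) // Rmult_1_l S_INR.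
have [w0 w1] := w_bounds N.+1 isT; have [i0 i1] := ind_bounds A N.+1.
have iw : 0 <= Defs.ind A N.+1 * w N.+1 <= w N.+1 by split; nra.
case: (leqP M N.+1) => [/A_cofinite A_N | lt_NM].
  by rewrite ind_true // Rmult_1_l; lra.
have := INR_leq lt_NM; rewrite !S_INR; lra.
Qed.

Lemma weighted_count_ones N : weighted_count (fun _ => True) (fun _ => 1) N = INR N.
Proof.
elim: N => [//|N IH].
by rewrite weighted_count_S IH (@ind_true (fun _ => True)) // Rmult_1_l S_INR.
Qed.

Lemma ratio_cv_one (a b : nat -> R) C :
  (forall N, (0 < N)%nat -> Rabs (a N - b N) <= C) ->
  (forall K, exists N0, forall N, (N0 <= N)%nat -> K < b N) ->
  Un_cv (fun N => a N / b N) 1.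
Proof.
move=> close grows eps eps_gt0.
have C_ge0 : 0 <= C := Rle_trans _ _ _ (Rabs_pos _) (close 1%nat isT).
have [N0 big] := grows (C / eps).
exists (maxn N0 1) => N /leP; rewrite geq_max => /andP[le_N0N N_gt0].
have b_big := big N le_N0N.
have C_lt : C < eps * b N.
  have := Rmult_lt_compat_l eps _ _ eps_gt0 b_big.
  by have -> : eps * (C / eps) = C by field; lra.
have b_gt0 : 0 < b N.
  apply: Rle_lt_trans b_big; apply: Rmult_le_pos => //.
  exact/Rlt_le/Rinv_0_lt_compat.
have inv_gt0 := Rinv_0_lt_compat _ b_gt0.
rewrite /R_dist; have -> : a N / b N - 1 = (a N - b N) * / b N by field; lra.
rewrite Rabs_mult (Rabs_pos_eq (/ b N)); last lra.
apply: Rle_lt_trans (Rmult_le_compat_r _ _ _ (Rlt_le _ _ inv_gt0) (close N N_gt0)) _.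
apply: (Rmult_lt_reg_r (b N)) => //.
by rewrite Rmult_assoc Rinv_l ?Rmult_1_r; lra.
Qed.

(* Cofinite sets have natural density 1: their count up to N is within M of N. *)
Lemma cofinite_natural_density A M :
  (forall n, (M <= n)%nat -> A n) -> has_natural_density A 1.
Proof.
move=> A_cofinite; apply: (@ratio_cv_one _ _ (INR M)) => [N _ | K].
  rewrite count_upto_weighted.
  have ones_bounds n : (0 < n)%nat -> 0 <= 1 <= 1 by lra.
  have [[_ cnt_le] [_ cnt_lower]] :=
    weighted_count_cofinite ones_bounds A_cofinite N.
  rewrite weighted_count_ones in cnt_le cnt_lower.
  by apply: Rabs_le; have := pos_INR M; lra.
have [N0 big] := INR_unbounded K.
by exists N0 => N /INR_leq; lra.
Qed.

Definition harmonic (N : nat) : R := weighted_count (fun _ => True) (fun n => / INR n) N.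

(* ln y <= y - 1, from exp x >= 1 + x. *)
Lemma ln_le_pred x : 0 < x -> ln x <= x - 1.
Proof. by move=> x_gt0; have := exp_ineq1_le (ln x); rewrite exp_ln //; lra. Qed.

(* 1/(a+1) <= ln (a+1) - ln a <= 1/a, from ln y <= y - 1 at y = (a+1)/a and
   y = a/(a+1). *)
Lemma ln_succ_bounds a : 0 < a -> / (a + 1) <= ln (a + 1) - ln a <= / a.
Proof.
move=> a_gt0; have ia := Rinv_0_lt_compat _ a_gt0.
have ia1 : 0 < / (a + 1) by apply: Rinv_0_lt_compat; lra.
have up := ln_le_pred (Rmult_lt_0_compat (a + 1) _ ltac:(lra) ia).
have low := ln_le_pred (Rmult_lt_0_compat _ _ a_gt0 ia1).
rewrite !ln_mult ?ln_Rinv // in up low; try lra.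
have e1 : (a + 1) * / a - 1 = / a by field; lra.
have e2 : a * / (a + 1) - 1 = - / (a + 1) by field; lra.
lra.
Qed.

(* ln (N + 1) <= H(N) <= 1 + ln N, by summing the bounds of ln_succ_bounds. *)
Lemma harmonic_bounds N : (0 < N)%nat -> ln (INR N + 1) <= harmonic N <= 1 + ln (INR N).
Proof.
case: N => [//|N] _; elim: N => [|N IH].
  rewrite /harmonic weighted_count_S (@ind_true (fun _ => True)) //= Rplus_0_l.
  rewrite Rinv_1 Rmult_1_l ln_1; have := @ln_le_pred 2 ltac:(lra).
  have -> : 1 + 1 = 2 by lra.
  lra.
rewrite /harmonic weighted_count_S (@ind_true (fun _ => True)) // Rmult_1_l -/(harmonic _).
have N1 : 1 <= INR N.+1 by rewrite S_INR; have := pos_INR N; lra.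
have [_ step] := @ln_succ_bounds (INR N.+1 + 1) ltac:(lra).
have [step' _] := @ln_succ_bounds (INR N.+1) ltac:(lra).
rewrite (S_INR N.+1) in IH *; lra.
Qed.

(* Cofinite sets have logarithmic density 1: their logarithmic count up to N
   is within M of H(N), which is within 1 of ln N. *)
Lemma cofinite_log_density A M :
  (forall n, (M <= n)%nat -> A n) -> has_log_density A 1.
Proof.
move=> A_cofinite.
apply: (@ratio_cv_one _ (fun N => ln (INR N)) (INR M + 1)) => [N N_gt0 | K].
  have inv_bounds n : (0 < n)%nat -> 0 <= / INR n <= 1.
    move=> n_gt0; have n1 : 1 <= INR n by apply: (INR_leq n_gt0).
    split; first by apply/Rlt_le/Rinv_0_lt_compat; lra.
    by rewrite -Rinv_1; apply: Rinv_le_contravar; lra.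
  have [[_ cnt_le] [_ cnt_lower]] := weighted_count_cofinite inv_bounds A_cofinite N.
  rewrite -/(harmonic N) in cnt_le cnt_lower.
  change (logsum_upto A N) with (weighted_count A (fun n => / INR n) N).
  have [H_low H_up] := harmonic_bounds N_gt0.
  have N_pos : 0 < INR N by apply: lt_0_INR; apply/ltP.
  have := ln_increasing (INR N) (INR N + 1) N_pos ltac:(lra).
  by move=> ln_incr; apply: Rabs_le; have := pos_INR M; lra.
have [N0 big] := INR_unbounded (exp K).
exists N0 => N /INR_leq le_N0N; rewrite -[X in X < _]ln_exp.
by apply: ln_increasing; [exact: exp_pos | lra].
Qed.

Theorem proposition5p1 :
  liminf_eq D (1/2) /\
  (forall u : R, 0 <= u < 1/2 ->
     (exists N : nat, forall n : nat, (1 <= n)%coq_nat -> ~ Nset u n -> (n < N)%coq_nat) /\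
     has_natural_density (Nset u) 1 /\
     has_log_density (Nset u) 1).
Proof.
split; first by split; [exact: D_eventually_above | exact: D_frequently_below].
move=> u [u_ge0 u_lt_half].
have [N above] := D_eventually_above (eps := 1/2 - u) ltac:(lra).
have in_N n : (N <= n)%nat -> (1 <= n)%nat -> Nset u n.
  by move=> le_Nn n_ge1; split => //; have := above n le_Nn; lra.
have cofinite n : (maxn N 1 <= n)%nat -> Nset u n.
  by rewrite geq_max => /andP[]; apply: in_N.
split; last split.
- exists N => n /leP n_ge1 n_notin; apply/ltP; rewrite ltnNge.
  by apply: contra_notN n_notin => /in_N; apply.
- exact: cofinite_natural_density cofinite.
- exact: cofinite_log_density cofinite.
Qed.
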